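(* Let $G$ be a stitched 2-ichromatic ordered graph whose two parts (in its interval 2-coloring) have sizes $m$ and $n$. Then $R(G) \geq 4r+1$, where $r = \min(m,n)-1$.
   Context: An ordered graph is a graph together with a specified linear ordering of its vertex set. An ordered graph $G$ is contained in an ordered graph $H$ (a copy of $G$ in $H$) if there is an order-preserving injection $V(G)\to V(H)$ mapping edges to edges. An interval coloring of an ordered graph is a partition of its vertex set into independent sets each consisting of consecutive vertices (these sets are called parts); the interval chromatic number is the minimum number of parts in an interval coloring, and an ordered graph is $k$-ichromatic if its interval chromatic number is $k$. A $k$-ichromatic ordered graph is stitched if, for some interval coloring with $k$ parts, the set of size $2k$ consisting of the first and last vertex of each part lies in a single connected component of the graph (for stitched 2-ichromatic graphs the interval 2-coloring is unique). For $t\ge 1$, the $t$-color Ramsey number $R_t(G)$ of an ordered graph $G$ is the minimum $N$ such that every coloring of the edges of the ordered complete graph on $N$ vertices with $t$ colors contains a monochromatic copy of $G$ (as an ordered subgraph); $R(G)=R_2(G)$. *)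

From mathcomp Require Import all_boot.
Set Implicit Arguments. Unset Strict Implicit. Unset Printing Implicit Defensive.

(* An ordered graph on N vertices: vertex set 'I_N with its natural linear
   order; edges given by a symmetric irreflexive relation e (hypotheses are
   taken in the theorem). *)

Definition interval_2col (N : nat) (e : rel 'I_N) (k : nat) : Prop :=
  0 < k < N /\ forall u v : 'I_N, e u v -> (val u < k) = (val v < k) -> False.

Definition interval_1col (N : nat) (e : rel 'I_N) : Prop :=
  0 < N /\ forall u v : 'I_N, e u v -> False.

Definition ichromatic2 (N : nat) (e : rel 'I_N) : Prop :=
  (exists k, interval_2col e k) /\ ~ interval_1col e.

(* Stitched (2-ichromatic case): for some interval 2-coloring with parts
   [0,k), [k,N), the first and last vertices of each part, i.e. 0, k-1, k,
   N-1, lie in a single connected component. *)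
Definition stitched2 (N : nat) (e : rel 'I_N) : Prop :=
  exists k, interval_2col e k /\
    forall u v : 'I_N,
      val u \in [:: 0; k.-1; k; N.-1] -> val v \in [:: 0; k.-1; k; N.-1] ->
      connect e u v.

(* Every red/blue coloring of the edges of the ordered complete graph on M
   vertices contains a monochromatic copy of the ordered graph e.
   The color of the edge {x,y} with x < y is c x y. *)
Definition ramsey2_prop (N : nat) (e : rel 'I_N) (M : nat) : Prop :=
  forall c : 'I_M -> 'I_M -> bool,
    exists (f : 'I_N -> 'I_M) (b : bool),
      (forall i j : 'I_N, i < j -> f i < f j) /\
      (forall i j : 'I_N, i < j -> e i j -> c (f i) (f j) = b).

From mathcomp Require Import all_boot.
From mathcomp Require Import zify.

Set Implicit Arguments.
Unset Strict Implicit.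
Unset Printing Implicit Defensive.

(* Cut the vertices 0, ..., 4r-1 of K_{4r} into four blocks of r consecutive
   vertices and colour an edge blue iff its endpoints lie in blocks of
   different parity. Along a red path the block parity is constant; along a
   blue path in the bipartite graph G it flips exactly when the path switches
   parts. Hence in a monochromatic copy of G, where the first and last
   vertices of both parts lie in one component, the first and last vertices
   of each part sit in blocks of equal parity. Each part has at least r+1
   vertices, so its first and last vertices lie in different blocks, at
   distance at least two; the four endpoints would therefore need a fifth
   block. *)

Section StitchedParts.

Variables (N : nat) (e : rel 'I_N).

Lemma interval_2col_edge k u v :
  interval_2col e k -> e u v -> (val u < k) = ~~ (val v < k).
Proof.
case=> _ indep euv; move: (indep u v euv).
by case: (val u < k); case: (val v < k) => // /(_ erefl).
Qed.

(* Two interval 2-colourings differ on a vertex iff they differ on each of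
   its neighbours, so stitching forces the colouring to be unique. *)
Lemma stitched2_at m : stitched2 e -> interval_2col e m ->
  forall u v : 'I_N,
    val u \in [:: 0; m.-1; m; N.-1] -> val v \in [:: 0; m.-1; m; N.-1] ->
    connect e u v.
Proof.
case=> k [colk stitch] colm.
suff -> : m = k by [].
have [/andP[k0 kN] _] := colk; have [/andP[m0 _] _] := colm.
pose differ (u : 'I_N) := (val u < k) (+) (val u < m).
have differ_connect u v : connect e u v -> differ u = differ v.
  apply: (closed_connect (a := differ)) => {}u {}v euv.
  by rewrite !unfold_in /differ (interval_2col_edge colk euv)
    (interval_2col_edge colm euv) addNb addbN negbK.
have from0 (i : nat) (ltiN : i < N) : i \in [:: k.-1; k] ->
    differ (Ordinal ltiN) = false.
  move=> ik; have lt0N : 0 < N by lia.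
  have -> : false = differ (Ordinal lt0N) by rewrite /differ /= k0 m0.
  apply/esym/differ_connect/stitch; first by rewrite inE eqxx.
  by move: ik; rewrite /= !inE => /orP[] ->; rewrite ?orbT.
have := from0 k.-1 ltac:(lia) ltac:(by rewrite !inE eqxx).
have := from0 k kN ltac:(by rewrite !inE eqxx orbT).
rewrite /differ /= ltnn; have -> : k.-1 < k by lia.
by case: ltngtP => // lt_m_k; have -> : k.-1 < m = false by lia.
Qed.

End StitchedParts.

Lemma increasing_ord_gap N M (f : 'I_N -> 'I_M) :
  (forall i j : 'I_N, i < j -> f i < f j) ->
  forall d (i j : 'I_N), j = i + d :> nat -> f i + d <= f j.
Proof.
move=> f_incr; elim=> [|d IHd] i j ji.
  by rewrite addn0 in ji; rewrite addn0 (val_inj ji).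
have lt_id_N : i + d < N by have := ltn_ord j; lia.
have := IHd i (Ordinal lt_id_N) erefl.
have := f_incr (Ordinal lt_id_N) j; rewrite /= ji; lia.
Qed.

Lemma block_parity_gap r a b : 0 < r -> a + r <= b ->
  odd (a %/ r) = odd (b %/ r) -> (a %/ r).+2 <= b %/ r.
Proof.
move=> r_gt0 ab same_parity.
have : (a %/ r).+1 <= b %/ r.
  by have := leq_div2r r ab; rewrite divnDr ?dvdnn // divnn r_gt0 addn1.
rewrite leq_eqVlt => /orP[/eqP ab_next|//].
by rewrite -ab_next /= in same_parity; case: odd same_parity.
Qed.

Lemma four_blocks r a0 a1 a2 a3 : 0 < r ->
  a0 + r <= a1 -> a1 <= a2 -> a2 + r <= a3 ->
  odd (a0 %/ r) = odd (a1 %/ r) -> odd (a2 %/ r) = odd (a3 %/ r) -> 4 * r <= a3.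
Proof.
move=> r_gt0 a01 a12 a23 /(block_parity_gap r_gt0 a01) b01
  /(block_parity_gap r_gt0 a23) b23.
have b12 := leq_div2r r a12.
rewrite -leq_divRL //; move: b01 b12 b23.
by move: (a0 %/ r) (a1 %/ r) (a2 %/ r) (a3 %/ r); lia.
Qed.

Definition block_coloring r {M} (x y : 'I_M) : bool := odd (x %/ r + y %/ r).

Section MonochromaticCopy.

Variables (N M r m : nat) (e : rel 'I_N) (f : 'I_N -> 'I_M) (b : bool).
Hypotheses (e_sym : symmetric e) (e_irr : irreflexive e).
Hypothesis colm : interval_2col e m.
Hypothesis f_mono : forall i j : 'I_N,
  i < j -> e i j -> block_coloring r (f i) (f j) = b.

Lemma block_parity_connect u v : connect e u v ->
  (val u < m) = (val v < m) -> odd (f u %/ r) = odd (f v %/ r).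
Proof.
pose inv (w : 'I_N) := odd (f w %/ r) (+) ((val w < m) && b).
have inv_edge x y : e x y -> inv x = inv y.
  move=> exy; have colour : odd (f x %/ r) (+) odd (f y %/ r) = b.
    rewrite -oddD; case: (ltngtP x y) => xy.
    - exact: f_mono.
    - by rewrite addnC; apply: f_mono; rewrite // e_sym.
    - by move: exy; rewrite (val_inj xy) e_irr.
  rewrite /inv (interval_2col_edge colm exy) -colour.
  by case: (odd _); case: (odd _); case: (_ < m).
move=> /(closed_connect inv_edge) same_inv same_part.
move: same_inv; rewrite !unfold_in /inv same_part.
by case: (_ && b); case: odd; case: odd.
Qed.

End MonochromaticCopy.

Theorem theorem1 (N m n : nat) (e : rel 'I_N)
  (e_sym : symmetric e) (e_irr : irreflexive e)
  (G2 : ichromatic2 e) (Gst : stitched2 e)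
  (Hparts : interval_2col e m) (HN : N = m + n) :
  forall M : nat, ramsey2_prop e M -> 4 * (minn m n - 1) + 1 <= M.
Proof.
move=> M HM; set r := minn m n - 1.
have stitch := stitched2_at Gst Hparts.
have [/andP[m_gt0 mN] _] := Hparts.
have [lt0N lt_m1_N lt_N1_N] : [/\ 0 < N, m.-1 < N & N.-1 < N] by split; lia.
rewrite leqNgt; apply/negP => M_small.
have [r0 | r_gt0] := posnP r.
  have [f _] := HM (fun _ _ => true).
  by case: (f (Ordinal lt0N)); lia.
have [f [b [f_incr f_mono]]] := HM (block_coloring r).
have parity (u v : 'I_N) : val u \in [:: 0; m.-1; m; N.-1] ->
    val v \in [:: 0; m.-1; m; N.-1] -> (val u < m) = (val v < m) ->
    odd (f u %/ r) = odd (f v %/ r).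
  by move=> u_end v_end; apply: (block_parity_connect e_sym e_irr Hparts f_mono);
    apply: stitch.
pose i0 := Ordinal lt0N; pose i1 := Ordinal lt_m1_N.
pose i2 := Ordinal mN; pose i3 := Ordinal lt_N1_N.
have gap01 := @increasing_ord_gap _ _ f f_incr m.-1 i0 i1 erefl.
have gap23 := @increasing_ord_gap _ _ f f_incr n.-1 i2 i3 ltac:(rewrite /= HN; lia).
have := @four_blocks r (f i0) (f i1) (f i2) (f i3) r_gt0 _
  (ltnW (f_incr i1 i2 _)) _ (parity i0 i1 _ _ _) (parity i2 i3 _ _ _).
rewrite /= !inE !eqxx ?orbT; have := ltn_ord (f i3); lia.
Qed.
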